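(* For integers $1\le k\le l$, up to a unit of $\mathbb{Z}[q,q^{-1}]$, $$\frac{g_{l,k}}{g_{l,k-1}}=\prod_{\substack{m\mid l-k+1\\ 1\le m\le k}}\Phi_m .$$
   Context: In $\mathbb{Z}[q,q^{-1}]$ set $\{i\}_q=q^i-1$, $\{i\}_{q,n}=\{i\}_q\cdots\{i-n+1\}_q$ (equal to $1$ for $n=0$), $\{n\}_q!=\{n\}_{q,n}$. For $0\le i\le k\le l$ set $h_{l,k,i}=\{l-i\}_{q,k-i}\{i\}_q!$ and $g_{l,k}=\mathrm{GCD}(h_{l,k,0},\dots,h_{l,k,k})$ (greatest common divisor in the UFD $\mathbb{Z}[q,q^{-1}]$, defined up to units $\pm q^j$). $\Phi_m$ is the $m$th cyclotomic polynomial. *)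

From HB Require Import structures.
From mathcomp Require Import all_boot all_order all_algebra all_field.
Set Implicit Arguments. Unset Strict Implicit. Unset Printing Implicit Defensive.
Import Order.TTheory GRing.Theory Num.Theory.
Local Open Scope ring_scope.

Definition qbr (i : nat) : {poly int} := 'X^i - 1.
Definition qfall (i n : nat) : {poly int} := \prod_(j < n) qbr (i - j)%N.
Definition qfact (n : nat) : {poly int} := qfall n n.
Definition hlki (l k i : nat) : {poly int} := qfall (l - i)%N (k - i)%N * qfact i.

(* Divisibility in the Laurent ring Z[q,q^-1], for a b in Z[q]:
   a | b in Z[q,q^-1]  iff  q^j b = a s for some j : nat and s in Z[q]. *)
Definition ldvd (a b : {poly int}) : Prop :=
  exists (j : nat) (s : {poly int}), 'X^j * b = a * s.

(* g is a greatest common divisor in Z[q,q^-1] of f 0, ..., f n.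
   (Every element of Z[q,q^-1] is associate to a polynomial, so it suffices
   to range over polynomial representatives.) *)
Definition is_lgcd (g : {poly int}) (f : nat -> {poly int}) (n : nat) : Prop :=
  (forall i, (i <= n)%N -> ldvd g (f i)) /\
  (forall d : {poly int}, (forall i, (i <= n)%N -> ldvd d (f i)) -> ldvd d g).

From HB Require Import structures.
From mathcomp Require Import all_boot all_order all_algebra all_field zify.

Set Implicit Arguments.
Unset Strict Implicit.
Unset Printing Implicit Defensive.

(* All h_{l,k,i} are monic products of factors q^n - 1, so
   their roots are roots of unity and their gcd can be computed cyclotomic
   factor by cyclotomic factor.  If z is a primitive e-th root of unity, the
   multiplicity of z in h_{l,k,i} counts the multiples of e in the exponent
   windows (l-k, l-i] and (0, i], namely
       hexp l k e i = (l-i)/e - (l-k)/e + i/e,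
   so  G_{l,k} := prod_{1 <= e <= l} Phi_e ^ (min_{i <= k} hexp l k e i)
   is a gcd of the h_{l,k,i} in Z[q,q^-1] (divisibility is tested through
   root multiplicities over algC and Gauss's lemma).  A purely arithmetic
   computation shows that this minimal exponent grows by exactly
   [e <= k+1 and e | l-k] when k becomes k+1; hence G_{l,k+1} = G_{l,k} P
   with P the product of the statement.  Since gcds are unique up to the
   units +-q^j of Z[q,q^-1], the theorem follows.
   The file develops: (1) the arithmetic of the exponents, (2) root
   multiplicities of polynomials, (3) the multiplicities of the h_{l,k,i},
   (4) divisibility in Z[q,q^-1], (5) the explicit gcd, and the theorem. *)

Fixpoint min_upto (f : nat -> nat) (n : nat) : nat :=
  if n is n'.+1 then minn (min_upto f n') (f n) else f 0.

Lemma min_upto_le f n i : i <= n -> min_upto f n <= f i.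
Proof.
elim: n => [|n IH]; first by rewrite leqn0 => /eqP ->.
rewrite leq_eqVlt ltnS => /orP[/eqP ->|/IH h] /=; first by rewrite geq_minr.
by apply: leq_trans h; rewrite geq_minl.
Qed.

Lemma min_upto_ge f n x : (forall i, i <= n -> x <= f i) -> x <= min_upto f n.
Proof.
elim: n => [|n IH] H /=; first exact: H.
by rewrite leq_min IH ?H // => i hi; apply: H; apply: leq_trans hi _.
Qed.

Lemma eq_min_upto f g n :
  (forall i, i <= n -> f i = g i) -> min_upto f n = min_upto g n.
Proof.
elim: n => [|n IH] H /=; first exact: H.
by rewrite IH ?H // => i hi; apply: H; apply: leq_trans hi _.
Qed.

Lemma min_uptoDr f c n : min_upto (fun i => f i + c) n = min_upto f n + c.
Proof. by elim: n => [|n IH] //=; rewrite IH addn_minl. Qed.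

Lemma count_dvd_window e a b : 0 < e -> b <= a ->
  \sum_(j < b) (e %| a - j) = a %/ e - (a - b) %/ e.
Proof.
move=> e0; elim: b => [|b IH] ba; first by rewrite big_ord0 subn0 subnn.
rewrite big_ord_recr /= IH; last exact: ltnW.
have Hab : a - b = (a - b.+1).+1 by rewrite subnS prednK // subn_gt0.
have le1 : (a - b) %/ e <= a %/ e by apply: leq_div2r; rewrite leq_subr.
rewrite Hab divnS // in le1 *.
move: (e %| (a - b.+1).+1) ((a - b.+1) %/ e) (a %/ e) le1 => x y w.
by case: x => /= h; lia.
Qed.

(* Exponent of Phi_e in h_{l,k,i}, and the minimal one over i <= k, which is
   the exponent of Phi_e in g_{l,k}. *)
Definition hexp l k e i := (l - i) %/ e - (l - k) %/ e + i %/ e.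
Definition gexp l k e := min_upto (hexp l k e) k.

Lemma hexp_shift l k e i : 0 < e -> k < l -> i <= k ->
  hexp l k.+1 e i = hexp l k e i + (e %| l - k).
Proof.
move=> e0 kl ik; have Ak : l - k = (l - k.+1).+1 by lia.
have : (l - k) %/ e <= (l - i) %/ e by apply: leq_div2r; lia.
by rewrite /hexp Ak divnS // -Ak; lia.
Qed.

Lemma hexp_last l k e : hexp l k e k = k %/ e.
Proof. by rewrite /hexp subnn. Qed.

Lemma gexp_le_last l k e : gexp l k e <= k %/ e.
Proof. by rewrite -(hexp_last l); apply: min_upto_le. Qed.

(* When e | l-k but e does not divide k+1, the index i = (k/e) e - 1 beats
   the last index i = k. *)
Lemma gexp_lt_last l k e : 0 < e -> k <= l -> e <= k -> ~~ (e %| k.+1) ->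
  e %| l - k -> gexp l k e < k %/ e.
Proof.
move=> e0 kl ek kd /dvdnP[c dc].
have dk := divn_eq k e; set q := k %/ e in dk *; set r := k %% e in dk.
have q0 : 0 < q by rewrite /q divn_gt0.
have rlt : r.+1 < e.
  rewrite ltn_neqAle ltn_mod e0 andbT; apply: contraNneq kd => re.
  by rewrite /dvdn -addn1 -modnDml -/r addn1 re modnn.
have small_div y x : x < e -> (y * e + x) %/ e = y.
  by move=> xe; rewrite divnMDl // divn_small ?addn0.
apply: leq_ltn_trans (@min_upto_le _ k (q * e - 1) _) _; first lia.
rewrite /hexp dc mulnK //.
have -> : l - (q * e - 1) = c * e + r.+1 by lia.
have qe : e <= q * e by rewrite leq_pmull.
have -> : q * e - 1 = (q - 1) * e + (e - 1) by rewrite mulnBl mul1n; lia.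
by rewrite !small_div; lia.
Qed.

Lemma gexp_step l k e : 0 < e -> k < l ->
  gexp l k.+1 e = gexp l k e + ((e <= k.+1) && (e %| l - k)).
Proof.
move=> e0 kl; rewrite /gexp /=.
rewrite (@eq_min_upto _ (fun i => hexp l k e i + (e %| l - k))); last first.
  by move=> i ik; apply: hexp_shift.
rewrite min_uptoDr hexp_last divnS // -/(gexp l k e).
have Mk := gexp_le_last l k e.
case: (leqP e k.+1) => ek /=; last first.
  have q0 : k %/ e = 0 by rewrite divn_small // ltnW.
  have -> : (e %| k.+1) = false by rewrite /dvdn modn_small.
  by move: Mk; rewrite q0 leqn0 => /eqP ->; case: (e %| l - k).
case kd : (e %| k.+1).
  by apply/minn_idPl; rewrite addnC leq_add ?leq_b1.
case ld : (e %| l - k); last by rewrite addn0; apply/minn_idPl.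
have ek' : e <= k.
  by rewrite -ltnS ltn_neqAle ek andbT; apply: contraFneq kd => ->.
apply/minn_idPl; rewrite addn1 gexp_lt_last //; [exact: ltnW | by rewrite kd].
Qed.

Import Order.TTheory GRing.Theory Num.Theory.
Local Open Scope ring_scope.

Section FieldMultiplicity.

Variable F : fieldType.
Implicit Types p q : {poly F}.

Lemma mup_prod (I : Type) (r : seq I) (P : pred I) (G : I -> {poly F}) z :
  (forall i, P i -> G i != 0) ->
  mup z (\prod_(i <- r | P i) G i) = (\sum_(i <- r | P i) mup z (G i))%N.
Proof.
move=> G0; pose K p (n : nat) := p != 0 /\ mup z p = n.
suff [] : K (\prod_(i <- r | P i) G i) (\sum_(i <- r | P i) mup z (G i))%N by [].
apply: (big_rec2 K); first by split; rewrite ?oner_eq0 // mupNroot // root1.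
move=> i p n Pi [p0 <-]; split; first by rewrite mulf_neq0 ?G0.
by rewrite mupM ?G0.
Qed.

Lemma mup_exp p n z : p != 0 -> mup z (p ^+ n) = (n * mup z p)%N.
Proof.
move=> p0; elim: n => [|n IH]; first by rewrite expr0 mupNroot // root1.
by rewrite exprS mupM ?expf_neq0 // IH mulSn.
Qed.

Lemma mup_dvdp p q z : q != 0 -> p %| q -> (mup z p <= mup z q)%N.
Proof.
move=> q0 pq; have p0 : p != 0 by apply: contraNneq q0 => p0; move: pq; rewrite p0 dvd0p.
by rewrite mup_geq //; apply: dvdp_trans pq; rewrite -mup_geq.
Qed.

Lemma mup_lt_size p z : p != 0 -> (mup z p < size p)%N.
Proof.
move=> p0; have := leqnn (mup z p); rewrite mup_geq // => /dvdp_leq.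
by rewrite size_exp_XsubC; apply.
Qed.

End FieldMultiplicity.

Lemma dvdp_of_mup (F : closedFieldType) (p q : {poly F}) : p != 0 -> q != 0 ->
  (forall z, (mup z p <= mup z q)%N) -> p %| q.
Proof.
move: {2}(size p) (leqnn (size p)) => n; elim: n p q => [|n IH] p q.
  by rewrite leqn0 size_poly_eq0 => /eqP -> /eqP.
move=> pn p0 q0 Hm.
case: (boolP (size p == 1%N)) => [/size_poly1P [c c0 ->]|].
  by rewrite -[c%:P]mulr1 mul_polyC dvdpZl // dvd1p.
move/closed_rootP=> [r rp].
have [p1 ep] := factor_theorem _ _ rp.
have rq : root q r.
  rewrite -dvdp_XsubCl XsubC_dvd //; apply: leq_trans (Hm r).
  by rewrite -XsubC_dvd // dvdp_XsubCl.
have [q1 eq] := factor_theorem _ _ rq.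
have p10 : p1 != 0 by apply: contraNneq p0 => h; rewrite ep h mul0r.
have q10 : q1 != 0 by apply: contraNneq q0 => h; rewrite eq h mul0r.
rewrite ep eq dvdp_mul2r ?polyXsubC_eq0 //; apply: IH => //.
  by move: pn; rewrite ep size_Mmonic ?monicXsubC // size_XsubC addn2.
by move=> z; have := Hm z; rewrite ep eq !mupM ?polyXsubC_eq0 // leq_add2r.
Qed.

Lemma prim_order_uniq (R : nzRingType) (z : R) e m :
  e.-primitive_root z -> m.-primitive_root z = (m == e).
Proof.
move=> pe; apply/idP/eqP => [pm|->//].
apply/eqP; rewrite eqn_dvd (prim_order_dvd pe) (prim_order_dvd pm).
by rewrite (prim_expr_order pe) (prim_expr_order pm) eqxx.
Qed.

Lemma pow_neq1_of_noprim (R : nzRingType) (z : R) l n :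
  (forall e : 'I_l.+1, ~~ e.-primitive_root z) -> (0 < n <= l)%N ->
  (z ^+ n == 1) = false.
Proof.
move=> noprim /andP[n0 nl]; apply/negbTE/eqP => zn.
have [m pm mn] := prim_order_exists n0 zn.
have ml : (m < l.+1)%N by rewrite ltnS (leq_trans (dvdn_leq n0 mn) nl).
by have := noprim (Ordinal ml); rewrite pm.
Qed.

Definition toC (p : {poly int}) : {poly algC} := map_poly (intr : int -> algC) p.

Lemma toC_eq0 p : (toC p == 0) = (p == 0).
Proof. by rewrite -!size_poly_eq0 size_map_inj_poly //; apply: intr_inj. Qed.

Lemma toC_monic_neq0 p : p \is monic -> toC p != 0.
Proof. by move=> pm; rewrite toC_eq0 monic_neq0. Qed.

Lemma toC_qbr n : toC (qbr n) = 'X^n - 1.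
Proof. by rewrite /toC /qbr rmorphB /= map_polyXn rmorph1. Qed.

Lemma toC_Xn_mul j p : toC ('X^j * p) = ('X - 0%:P) ^+ j * toC p.
Proof. by rewrite /toC rmorphM /= map_polyXn polyC0 subr0. Qed.

Lemma mup_Xn_sub_1 (z : algC) n :
  (0 < n)%N -> mup z ('X^n - 1) = (z ^+ n == 1) :> nat.
Proof.
move=> n0; have rt : root ('X^n - 1) z = (z ^+ n == 1).
  by rewrite /root !hornerE subr_eq0.
have nz : ('X^n - 1 : {poly algC}) != 0 by rewrite monic_neq0 ?monicXnsubC.
case: (boolP (z ^+ n == 1)) => zn; last by rewrite mupNroot // rt.
apply/eqP; rewrite eqn_leq -XsubC_dvd // dvdp_XsubCl rt zn andbT.
rewrite mup_leq //; apply/negP => sq.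
have sep : separable_poly ('X^n - 1 : {poly algC}).
  by apply: separable_Xn_sub_1; rewrite pnatr_eq0 -lt0n.
by rewrite (separable_nosquare sep) ?size_XsubC in sq.
Qed.

Lemma mup_Cyclotomic (z : algC) m :
  mup z (toC 'Phi_m) = m.-primitive_root z :> nat.
Proof.
case: m => [|m]; first by rewrite Cyclotomic0 /toC rmorph1 mupNroot ?root1.
have [w pw] := C_prim_root_exists (ltn0Sn m).
have rootPhi : root (toC 'Phi_m.+1) z = m.+1.-primitive_root z.
  by rewrite /toC (Cintr_Cyclotomic pw) root_cyclotomic.
have nz : toC 'Phi_m.+1 != 0 by rewrite toC_monic_neq0 ?Cyclotomic_monic.
case: (boolP (m.+1.-primitive_root z)) => pz; last by rewrite mupNroot // rootPhi.
apply/eqP; rewrite eqn_leq -XsubC_dvd // dvdp_XsubCl rootPhi pz andbT.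
have nzX : ('X^(m.+1) - 1 : {poly algC}) != 0 by rewrite monic_neq0 ?monicXnsubC.
apply: (@leq_trans (mup z ('X^(m.+1) - 1))); last first.
  by rewrite mup_Xn_sub_1 // (prim_expr_order pz) eqxx.
apply: mup_dvdp => //.
rewrite -toC_qbr /qbr -(prod_Cyclotomic (ltn0Sn m)) /toC rmorph_prod /=.
by rewrite (big_rem m.+1) /= ?dvdp_mulr // -dvdn_divisors.
Qed.

Lemma qfall_monic a b : (b <= a)%N -> qfall a b \is monic.
Proof.
move=> ba; apply: monic_prod => j _; apply/monicXnsubC.
by rewrite subn_gt0; apply: leq_trans (ltn_ord j) ba.
Qed.

Lemma hlki_monic l k i : (i <= k <= l)%N -> hlki l k i \is monic.
Proof. by case/andP=> ik kl; rewrite monicMl ?qfall_monic ?leq_sub2r. Qed.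

Lemma mup_qfall (z : algC) a b : (b <= a)%N ->
  mup z (toC (qfall a b)) = (\sum_(j < b) (z ^+ (a - j) == 1%R))%N.
Proof.
move=> ba; have aj_gt0 (j : 'I_b) : (0 < a - j)%N.
  by rewrite subn_gt0; apply: leq_trans (ltn_ord j) ba.
rewrite /toC /qfall rmorph_prod /= mup_prod => [|j _].
  by apply: eq_bigr => j _; rewrite -/(toC _) toC_qbr mup_Xn_sub_1.
by rewrite -/(toC _) toC_qbr monic_neq0 //; apply/monicXnsubC.
Qed.

Lemma mup_hlki (z : algC) l k i : (i <= k <= l)%N ->
  mup z (toC (hlki l k i)) =
  (\sum_(j < k - i) (z ^+ (l - i - j) == 1%R) +
   \sum_(j < i) (z ^+ (i - j) == 1%R))%N.
Proof.
case/andP=> ik kl; have kil : (k - i <= l - i)%N by rewrite leq_sub2r.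
rewrite /hlki /toC rmorphM /= mupM -?/(toC _) ?toC_monic_neq0 ?qfall_monic //.
by rewrite /qfact !mup_qfall.
Qed.

Lemma mup_hlki_prim (z : algC) l k i e : (i <= k <= l)%N ->
  e.-primitive_root z -> mup z (toC (hlki l k i)) = hexp l k e i.
Proof.
move=> ikl pe; have e0 := prim_order_gt0 pe; have /andP[ik kl] := ikl.
rewrite mup_hlki //.
under eq_bigr => j _ do rewrite -(prim_order_dvd pe).
under [X in (_ + X)%N]eq_bigr => j _ do rewrite -(prim_order_dvd pe).
rewrite !count_dvd_window // ?leq_sub2r // subnn div0n subn0 /hexp.
by have -> : (l - i - (k - i) = l - k)%N by lia.
Qed.

Lemma mup_hlki_noprim (z : algC) l k i : (i <= k <= l)%N ->
  (forall e : 'I_l.+1, ~~ e.-primitive_root z) -> mup z (toC (hlki l k i)) = 0%N.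
Proof.
move=> ikl noprim; have /andP[ik kl] := ikl.
rewrite mup_hlki // !big1 // => j _;
  by rewrite (pow_neq1_of_noprim noprim) //; have := ltn_ord j; lia.
Qed.

Lemma ldvd_trans (a b c : {poly int}) : ldvd a b -> ldvd b c -> ldvd a c.
Proof.
move=> [j [s E1]] [i [t E2]]; exists (i + j)%N, (s * t).
by rewrite exprD [_ ^+ i * _]mulrC -mulrA E2 mulrA E1 -mulrA.
Qed.

Lemma ldvd_mul2r (a b c : {poly int}) : ldvd a b -> ldvd (a * c) (b * c).
Proof. by move=> [j [s E]]; exists j, s; rewrite mulrA E -!mulrA [c * s]mulrC. Qed.

Lemma ldvd_neq0 (d h : {poly int}) : h != 0 -> ldvd d h -> d != 0.
Proof.
move=> h0 [j [s E]]; apply: contra_neq (mulf_neq0 (monic_neq0 (monicXn _ j)) h0).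
by move=> d0; rewrite E d0 mul0r.
Qed.

Lemma ldvd_contents (d h : {poly int}) :
  h \is monic -> ldvd d h -> zcontents d \is a GRing.unit.
Proof.
move=> hm [j [s E]]; apply/unitrPr; exists (zcontents s).
by rewrite -zcontentsM -E zcontents_monic // monicMl ?monicXn.
Qed.

(* Laurent divisibility bounds the multiplicities of nonzero roots ... *)
Lemma ldvd_mup (d h : {poly int}) (z : algC) : h != 0 -> z != 0 -> ldvd d h ->
  (mup z (toC d) <= mup z (toC h))%N.
Proof.
move=> h0 z0 [j [s E]].
have Xh0 : 'X^j * h != 0 := mulf_neq0 (monic_neq0 (monicXn _ j)) h0.
have d0 : d != 0 by apply: contraNneq Xh0 => d0; rewrite E d0 mul0r.
have s0 : s != 0 by apply: contraNneq Xh0 => s0; rewrite E s0 mulr0.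
have := congr1 (fun p => mup z (toC p)) E => /=.
rewrite toC_Xn_mul /toC rmorphM /= -!/(toC _).
rewrite !mupM ?expf_neq0 ?polyXsubC_eq0 ?toC_eq0 //.
by rewrite mup_XsubCX eq_sym (negbTE z0) add0n => ->; apply: leq_addr.
Qed.

(* ... and conversely, for a primitive divisor (Gauss's lemma); the power of q
   absorbs the root 0. *)
Lemma ldvd_of_mup (d g : {poly int}) : d != 0 -> g != 0 ->
  zcontents d \is a GRing.unit ->
  (forall z : algC, z != 0 -> (mup z (toC d) <= mup z (toC g))%N) -> ldvd d g.
Proof.
move=> d0 g0 cu Hm; pose J := size d.
have dC0 : toC d != 0 by rewrite toC_eq0.
have : toC d %| toC ('X^J * g).
  apply: dvdp_of_mup; rewrite ?toC_eq0 ?mulf_neq0 ?(monic_neq0 (monicXn _ J)) //.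
  move=> z; rewrite toC_Xn_mul mupM ?expf_neq0 ?polyXsubC_eq0 ?toC_eq0 //.
  rewrite mup_XsubCX; have [->|z0] := eqVneq z 0; last by rewrite add0n Hm.
  apply: leq_trans (leq_addr _ _); rewrite ltnW //.
  by have := mup_lt_size 0 dC0; rewrite size_map_inj_poly //; apply: intr_inj.
have defZtoC : (intr : int -> algC) =1 (ratr : rat -> algC) \o (intr : int -> rat).
  by move=> a; rewrite /= rmorph_int.
rewrite /toC !(eq_map_poly defZtoC) !map_poly_comp dvdp_map dvdp_rat_int.
move/dvdpP_int => [r Dr]; exists J, ((zcontents d)^-1 *: r).
rewrite Dr -scalerAr scalerAl; congr (_ * _).
by rewrite [X in _ *: X]zpolyEprim scalerA mulVr // scale1r.
Qed.

Lemma unit_monomial n (s t : {poly int}) : s * t = 'X^n ->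
  exists (e : bool) (m : nat), s = (-1) ^+ e * 'X^m.
Proof.
elim: n s t => [|n IH] s t E.
  have : s \is a GRing.unit by apply/unitrPr; exists t; rewrite E expr0.
  rewrite poly_unitE => /andP[/eqP s1 c0u].
  have -> : s = (s`_0)%:P by apply: size1_polyC; rewrite s1.
  have : s`_0 \is a intUnitRing.unitz := c0u.
  rewrite qualifE => /orP[] /eqP ->; first by exists false, 0%N; rewrite mulr1.
  by exists true, 0%N; rewrite mulr1 expr1 polyCN.
have : (s * t).[0] = 0 by rewrite E hornerXn expr0n.
rewrite hornerM => /eqP; rewrite mulf_eq0 => /orP[] /eqP h0.
  have /factor_theorem [s1 Es] : root s 0 by rewrite /root h0.
  rewrite polyC0 subr0 in Es.
  have /IH [e [m Em]] : s1 * t = 'X^n.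
    by apply: (mulIf (monic_neq0 (monicX int))); rewrite -exprSr -E Es mulrAC.
  by exists e, m.+1; rewrite Es Em exprSr mulrA.
have /factor_theorem [t1 Et] : root t 0 by rewrite /root h0.
rewrite polyC0 subr0 in Et.
apply: (IH s t1); apply: (mulIf (monic_neq0 (monicX int))).
by rewrite -exprSr -E Et mulrA.
Qed.

Lemma ldvd_antisym (a b : {poly int}) : a != 0 -> ldvd a b -> ldvd b a ->
  exists (e : bool) (x y : nat), 'X^x * a = (-1) ^+ e * 'X^y * b.
Proof.
move=> a0 [i [s E1]] [j [t E2]].
have : s * t = 'X^(i + j).
  by apply: (mulfI a0); rewrite mulrA -E1 -mulrA -E2 mulrA -exprD mulrC.
move/unit_monomial => [e [m Es]]; exists e, m, i.
by rewrite -mulrA E1 Es mulrCA [X in a * X]mulrA -expr2 sqrr_sign mul1r mulrC.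
Qed.

Lemma lgcd_ldvd (g g' : {poly int}) f n :
  is_lgcd g f n -> is_lgcd g' f n -> ldvd g g'.
Proof. by move=> [g_dvd _] [_ g'_max]; exact: g'_max g_dvd. Qed.

Definition gcd_poly l k : {poly int} :=
  \prod_(1 <= e < l.+1) 'Phi_e ^+ gexp l k e.

Lemma gcd_poly_monic l k : gcd_poly l k \is monic.
Proof. by apply: monic_prod => e _; apply/monic_exp/Cyclotomic_monic. Qed.

(* Every root multiplicity of G_{l,k} is the minimum of those of h_{l,k,i}:
   either z has an order e <= l, or z is a root of none of them. *)
Lemma mup_gcd_poly (z : algC) l k : (k <= l)%N ->
  mup z (toC (gcd_poly l k)) = min_upto (fun i => mup z (toC (hlki l k i))) k.
Proof.
move=> kl; rewrite /gcd_poly /toC rmorph_prod /= mup_prod => [|e _]; last first.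
  by rewrite rmorphXn expf_neq0 // toC_monic_neq0 ?Cyclotomic_monic.
under eq_bigr => e _ do
  rewrite rmorphXn mup_exp ?toC_monic_neq0 ?Cyclotomic_monic // mup_Cyclotomic.
case: (pickP (fun e : 'I_l.+1 => e.-primitive_root z)) => [e pe|noprim]; last first.
  rewrite big_nat big1 => [|m /andP[_ ml]]; last by rewrite (noprim (Ordinal ml)) muln0.
  have noprim' (e : 'I_l.+1) : ~~ e.-primitive_root z by rewrite noprim.
  apply/esym/eqP; rewrite -leqn0; apply: leq_trans (min_upto_le _ (leq0n k)) _.
  by rewrite (mup_hlki_noprim _ noprim') ?kl.
rewrite (eq_min_upto (g := hexp l k e)) => [|i ik]; last first.
  by rewrite (mup_hlki_prim _ pe) ?ik.
rewrite (eq_bigr (fun m => if m == e :> nat then gexp l k m else 0%N)) => [|m _].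
  by rewrite -big_mkcond big_nat1_eq (prim_order_gt0 pe) ltn_ord.
by rewrite (prim_order_uniq _ pe); case: eqP; rewrite ?muln1 ?muln0.
Qed.

Lemma gcd_poly_lgcd l k : (k <= l)%N -> is_lgcd (gcd_poly l k) (hlki l k) k.
Proof.
move=> kl; have hm i : (i <= k)%N -> hlki l k i \is monic.
  by move=> ik; rewrite hlki_monic ?ik.
split=> [i ik | d dvd_d].
  apply: ldvd_of_mup => [|||z _].
  - exact: monic_neq0 (gcd_poly_monic l k).
  - exact: monic_neq0 (hm _ ik).
  - by rewrite (zcontents_monic (gcd_poly_monic l k)) unitr1.
  - by rewrite mup_gcd_poly // min_upto_le.
have dh0 := dvd_d 0%N (leq0n k).
apply: ldvd_of_mup => [|||z z0].
- exact: ldvd_neq0 (monic_neq0 (hm _ (leq0n k))) dh0.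
- exact: monic_neq0 (gcd_poly_monic l k).
- exact: ldvd_contents (hm _ (leq0n k)) dh0.
rewrite mup_gcd_poly //; apply: min_upto_ge => i ik.
exact: ldvd_mup (monic_neq0 (hm _ ik)) z0 (dvd_d i ik).
Qed.

Lemma gcd_poly_step l k : (k < l)%N ->
  gcd_poly l k.+1 =
  gcd_poly l k * \prod_(1 <= m < k.+2 | (m %| (l - k.+1).+1)%N) 'Phi_m.
Proof.
move=> kl; have -> : (l - k.+1).+1 = (l - k)%N by lia.
rewrite (@big_nat_widen _ _ _ 1 k.+2 l.+1) // big_mkcond /gcd_poly -big_split /=.
apply: eq_big_nat => e /andP[e1 _]; rewrite gexp_step // exprD; congr (_ * _).
by rewrite andbC ltnS; case: (_ && _).
Qed.

Theorem mainTheorem5 (l k : nat) (g1 g2 : {poly int}) :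
  (1 <= k)%N -> (k <= l)%N ->
  is_lgcd g1 (hlki l k) k ->
  is_lgcd g2 (hlki l k.-1) k.-1 ->
  exists (e : bool) (a b : nat),
    'X^a * g1 =
    (-1) ^+ e * 'X^b * g2 *
      \prod_(1 <= m < k.+1 | (m %| (l - k).+1)%N) 'Phi_m.
Proof.
case: k => // k _ kl lg1 lg2 /=.
set P := \prod_(1 <= m < k.+2 | _) _.
have G1 := gcd_poly_lgcd kl; have G2 := gcd_poly_lgcd (ltnW kl).
have g1_0 : g1 != 0.
  apply: ldvd_neq0 (lg1.1 0%N (leq0n _)).
  by rewrite monic_neq0 ?hlki_monic ?kl.
have g1_g2P : ldvd g1 (g2 * P).
  apply: ldvd_trans (lgcd_ldvd lg1 G1) _.
  by rewrite gcd_poly_step //; apply/ldvd_mul2r/(lgcd_ldvd G2 lg2).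
have g2P_g1 : ldvd (g2 * P) g1.
  apply: ldvd_trans (lgcd_ldvd G1 lg1).
  by rewrite gcd_poly_step //; apply/ldvd_mul2r/(lgcd_ldvd lg2 G2).
have [e [a [b E]]] := ldvd_antisym g1_0 g1_g2P g2P_g1.
by exists e, a, b; rewrite E mulrA.
Qed.
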